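(* Let $m\ge1$ be an integer, $\Gamma_1,\Gamma_2$ co-prime integers with $1<\Gamma_1<\Gamma_2$, $m_1=m\Gamma_1$, $m_2=m\Gamma_2$, let $1\le j\le K+1$ and put $X=\min\big(m_2(1+\ddot n_{2,j}),\,m_1(1+\ddot n_{1,j})\big)$. (a) For every integer $N$ with $0\le N<X$ and every pair of erroneous remainders $\tilde r_1,\tilde r_2$ of $N$ whose errors satisfy $$-\frac{\sigma_j}{2}\le\frac{\Delta r_1-\Delta r_2}{m}<\frac{\sigma_j}{2},$$ Algorithm 2 (with index $j$) returns $\hat n_1=n_1$ and $\hat n_2=n_2$. (b) (Sharpness) For $N=X$ there exist erroneous remainders $\tilde r_1,\tilde r_2$ of $N$ whose errors satisfy the same condition, for which Algorithm 2 returns $(\hat n_1,\hat n_2)\ne(n_1,n_2)$.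
   Context: $|a|_b$ is the remainder of the integer $a$ modulo the positive integer $b$; $[x]=\lfloor x+1/2\rfloor$. For an integer $N\ge0$: folding integers $n_i=\lfloor N/m_i\rfloor$, remainders $r_i=N-n_im_i$; erroneous remainders are integers $\tilde r_i$ with $0\le\tilde r_i<m_i$, errors $\Delta r_i=\tilde r_i-r_i$. Euclidean sequence: $\sigma_{-1}=\Gamma_2$, $\sigma_0=\Gamma_1$, $\sigma_i=|\sigma_{i-2}|_{\sigma_{i-1}}$ for $i\ge1$; $K\ge0$ is the index with $\sigma_K>1$, $\sigma_{K+1}=1$. For $1\le n<\Gamma_1$, $S_{2,n}=\{|t\Gamma_2|_{\Gamma_1}:0\le t\le n\}$, $d_{2,n}$ = minimum distance between distinct elements of $S_{2,n}$; for $1\le n<\Gamma_2$, $S_{1,n}=\{|t\Gamma_1|_{\Gamma_2}:0\le t\le n\}$, $d_{1,n}$ likewise. $\ddot n_{2,j}=\max\{n:1\le n<\Gamma_1,\ d_{2,n}\ge\sigma_j\}$, $\ddot n_{1,j}=\max\{n:1\le n<\Gamma_2,\ d_{1,n}\ge\sigma_j\}$. $\bar\Gamma_{21}$ is the inverse of $\Gamma_2$ modulo $\Gamma_1$, $\bar\Gamma_{12}$ the inverse of $\Gamma_1$ modulo $\Gamma_2$. Algorithm 2 (index $j$, input $\tilde r_1,\tilde r_2$): compute $\mathbf q_{21}=(\tilde r_1-\tilde r_2)/m$. (i) If $\mathbf q_{21}\ge\sigma_j/2$: if some $x\in S_{2,\ddot n_{2,j}}$ satisfies $-\sigma_j/2\le\mathbf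 q_{21}-x<\sigma_j/2$, let $s_2=x$; otherwise let $s_2$ be an element of $S_{2,\ddot n_{2,j}}$ at minimum distance from $\mathbf q_{21}$. Let $\hat n_2\in[0,\Gamma_1)$ with $\hat n_2\equiv s_2\bar\Gamma_{21}\pmod{\Gamma_1}$ and $\hat n_1=[(\hat n_2m_2+\tilde r_2-\tilde r_1)/m_1]$. (ii) If $\mathbf q_{21}<-\sigma_j/2$: if some $y\in S_{1,\ddot n_{1,j}}$ satisfies $-\sigma_j/2\le\mathbf q_{21}+y<\sigma_j/2$, let $s_1=y$; otherwise let $s_1$ be an element of $S_{1,\ddot n_{1,j}}$ at minimum distance from $-\mathbf q_{21}$. Let $\hat n_1\in[0,\Gamma_2)$ with $\hat n_1\equiv s_1\bar\Gamma_{12}\pmod{\Gamma_2}$ and $\hat n_2=[(\hat n_1m_1+\tilde r_1-\tilde r_2)/m_2]$. (iii) If $-\sigma_j/2\le\mathbf q_{21}<\sigma_j/2$: $\hat n_1=\hat n_2=0$. *)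

From HB Require Import structures.
From mathcomp Require Import all_boot all_order all_algebra.
Set Implicit Arguments. Unset Strict Implicit. Unset Printing Implicit Defensive.
Import Order.TTheory GRing.Theory Num.Theory.

(* Euclidean sequence, shifted by 2 in the index:
   esig G1 G2 0 = sigma_{-1} = G2, esig G1 G2 1 = sigma_0 = G1,
   esig G1 G2 (i+2) = esig i mod esig (i+1).  Hence sigma_i = esig (i+1). *)
Fixpoint esig_pair (G1 G2 : nat) (k : nat) : nat * nat :=
  match k with
  | 0 => (G2, G1)
  | k'.+1 => let p := esig_pair G1 G2 k' in (p.2, p.1 %% p.2)
  end.
Definition esig (G1 G2 : nat) (k : nat) : nat := (esig_pair G1 G2 k).1.
Definition sigma (G1 G2 : nat) (i : nat) : nat := esig G1 G2 i.+1.

Definition Sset (a b n : nat) : seq nat := [seq (t * a) %% b | t <- iota 0 n.+1].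

Definition distn (x y : nat) : nat := (x - y) + (y - x).

(* minimum distance between distinct elements of S_{a,b,n}; all elements
   are < b, so b is a neutral upper bound for the minimum. *)
Definition dmin (a b n : nat) : nat :=
  \big[minn/b]_(x <- Sset a b n) \big[minn/b]_(y <- Sset a b n | x != y) distn x y.

Definition nddot (a b s : nat) : nat := \max_(1 <= n < b | s <= dmin a b n) n.

Definition round (x : rat) : int := Num.floor (x + 1 / 2)%R.

Local Open Scope ring_scope.

(* Algorithm 2 with index j (sigma_j = sigma G1 G2 j), as a relation between
   the inputs r1t, r2t and the possible outputs (n1h, n2h). *)
Definition alg2 (m G1 G2 j r1t r2t : nat) (n1h n2h : int) : Prop :=
  let m1 := (m * G1)%N in
  let m2 := (m * G2)%N in
  let s : rat := (sigma G1 G2 j)%:R in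
  let q : rat := ((r1t%:R - r2t%:R) / m%:R) in
  if s / 2 <= q then
    let S := Sset G2 G1 (nddot G2 G1 (sigma G1 G2 j)) in
    exists s2 : nat, s2 \in S /\
      (if has (fun x : nat => (- (s / 2) <= q - x%:R) && (q - x%:R < s / 2)) S
       then - (s / 2) <= q - s2%:R /\ q - s2%:R < s / 2
       else forall y, y \in S -> `|q - s2%:R| <= `|q - y%:R|) /\
      exists inv : nat, (G2 * inv = 1 %[mod G1])%N /\
        n2h = ((s2 * inv) %% G1)%N%:Z /\
        n1h = round ((n2h%:~R * m2%:R + r2t%:R - r1t%:R) / m1%:R)
  else if q < - (s / 2) then
    let S := Sset G1 G2 (nddot G1 G2 (sigma G1 G2 j)) in
    exists s1 : nat, s1 \in S /\
      (if has (fun y : nat => (- (s / 2) <= q + y%:R) && (q + y%:R < s / 2)) S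
       then - (s / 2) <= q + s1%:R /\ q + s1%:R < s / 2
       else forall y, y \in S -> `|- q - s1%:R| <= `|- q - y%:R|) /\
      exists inv : nat, (G1 * inv = 1 %[mod G2])%N /\
        n1h = ((s1 * inv) %% G2)%N%:Z /\
        n2h = round ((n1h%:~R * m1%:R + r1t%:R - r2t%:R) / m2%:R)
  else n1h = 0 /\ n2h = 0.

Definition err_ok (m G1 G2 j N r1t r2t : nat) : Prop :=
  let s : rat := (sigma G1 G2 j)%:R in
  let d1 : int := r1t%:Z - (N %% (m * G1))%N%:Z in
  let d2 : int := r2t%:Z - (N %% (m * G2))%N%:Z in
  let e : rat := (d1 - d2)%:~R / m%:R in
  - (s / 2) <= e /\ e < s / 2.

(* Write N = n1 m1 + r1 = n2 m2 + r2.  Then (r1 - r2) / m is the integer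
   d = n2 G2 - n1 G1.  If d > 0 it is the residue of n2 G2 modulo G1, an element of
   S_{2, n2''} (as n2 <= n2'' when N < X); if d < 0, -d is the residue of n1 G1 modulo G2,
   in S_{1, n1''}; and d = 0 forces n1 = n2 = 0 by coprimality.  Since 0 lies in these
   sigma_j-separated sets, |d| >= sigma_j when d <> 0.  The observed quotient
   q = (r1~ - r2~) / m is d plus an error in [-sigma_j/2, sigma_j/2), so the sign test picks
   the right branch and the window around q meets the set only in |d|; multiplying by the
   inverse recovers one folding integer, and rounding recovers the other, whose error
   is below 1/2 because sigma_j < G1.
   For sharpness, maximality of n2'' gives t <= n2'' with (n2'' + 1) G2 mod G1 closer than
   sigma_j to t G2 mod G1.  At N = m2 (n2'' + 1), an admissible r1~ puts q within sigma_j/2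
   of both residues, and the algorithm returns t (or 0) instead of n2'' + 1; the bound
   m1 (1 + n1'') is symmetric. *)

From HB Require Import structures.
From mathcomp Require Import all_boot all_order all_algebra.
From mathcomp Require Import ring lra zify.
Import Order.TTheory GRing.Theory Num.Theory.

Lemma esigSS G1 G2 k : esig G1 G2 k.+2 = esig G1 G2 k %% esig G1 G2 k.+1.
Proof. by []. Qed.

Lemma esig_eq0_step2 G1 G2 k i : esig G1 G2 k = 0 -> esig G1 G2 (k + i.*2) = 0.
Proof.
move=> h; elim: i => [|i IH]; first by rewrite addn0.
by rewrite doubleS !addnS esigSS IH mod0n.
Qed.

Section EuclideanSequence.

Variables G1 G2 K : nat.
Hypotheses (hK1 : 1 < sigma G1 G2 K) (hK2 : sigma G1 G2 K.+1 = 1).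

Lemma esig_gt0 k : k <= K.+2 -> 0 < esig G1 G2 k.
Proof.
(* A zero recurs two steps later, hence would reach sigma_K or sigma_{K+1}. *)
move=> hk; rewrite lt0n; apply/eqP => /(esig_eq0_step2 _ _ _ ((K.+2 - k)./2)).
have -> : k + ((K.+2 - k)./2).*2 = K.+2 - odd (K.+2 - k).
  by have := odd_double_half (K.+2 - k); lia.
by case: odd; rewrite ?subn1 ?subn0 /= => h; move: hK1 hK2; rewrite /sigma h.
Qed.

Lemma sigma_bounds j : 1 <= j <= K.+1 -> 0 < sigma G1 G2 j < G1.
Proof.
case/andP=> j_gt0 j_le; rewrite /sigma esig_gt0 //=.
elim: j j_gt0 j_le => [//|[|j] IH] _ hj; rewrite esigSS.
  by apply: (@ltn_pmod _ (esig G1 G2 1)); apply: esig_gt0.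
by apply: ltn_trans (IH isT (ltnW hj)); apply: ltn_pmod; apply/esig_gt0/ltnW.
Qed.

End EuclideanSequence.

Lemma SsetP a b n x : reflect (exists2 t, t <= n & x = t * a %% b) (x \in Sset a b n).
Proof.
apply: (iffP mapP) => [[t]|[t ht ->]]; last by exists t; rewrite // mem_iota add0n ltnS.
by rewrite mem_iota add0n ltnS => ht ->; exists t.
Qed.

Lemma mem_Sset a b {n t} : t <= n -> t * a %% b \in Sset a b n.
Proof. by move=> ht; apply/SsetP; exists t. Qed.

Lemma Sset0 a b n : 0 \in Sset a b n.
Proof. by have := @mem_Sset a b n 0 isT; rewrite mul0n mod0n. Qed.

Definition separated (s : nat) (S : seq nat) : bool :=
  all2rel (fun x y => (x != y) ==> (s <= distn x y)) S.

Lemma separatedP s S :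
  reflect {in S &, forall x y, x != y -> s <= distn x y} (separated s S).
Proof. by apply: (iffP allrelP) => sep x y xS yS; [apply/implyP | apply/implyP]; apply: sep. Qed.

Lemma separated_eq {s S x y} :
  separated s S -> x \in S -> y \in S -> distn x y < s -> x = y.
Proof.
move=> /separatedP sep xS yS; apply: contraTeq => /(sep _ _ xS yS).
by rewrite leqNgt.
Qed.

Lemma separated_ge s S x : separated s S -> 0 \in S -> x \in S -> 0 < x -> s <= x.
Proof.
move=> /separatedP sep zS xS; rewrite lt0n => /(sep _ _ xS zS).
by rewrite /distn subn0 sub0n addn0.
Qed.

Lemma leq_bigmin_seq (T : eqType) (r : seq T) (P : pred T) (F : T -> nat) b c :
  (c <= \big[minn/b]_(x <- r | P x) F x) = (c <= b) && all (fun x => P x ==> (c <= F x)) r.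
Proof.
elim: r => [|x r IH]; first by rewrite big_nil andbT.
by rewrite big_cons /=; case: (P x); rewrite //= leq_min IH andbCA.
Qed.

Lemma leq_dmin a b n s : (s <= dmin a b n) = (s <= b) && separated s (Sset a b n).
Proof.
rewrite /dmin leq_bigmin_seq; case: (leqP s b) => // hsb.
by apply: eq_all => x; rewrite leq_bigmin_seq hsb.
Qed.

Lemma nddot_cases a b s :
  nddot a b s = 0 \/ 0 < nddot a b s < b /\ s <= dmin a b (nddot a b s).
Proof.
rewrite /nddot big_seq_cond.
apply: (big_ind (fun M => M = 0 \/ 0 < M < b /\ s <= dmin a b M)) => [|x y|n]; first by left.
- by rewrite /maxn; case: ifP.
- by rewrite mem_index_iota => /andP[? ?]; right.
Qed.

Lemma nddot_lt a b s : 0 < b -> nddot a b s < b.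
Proof. by case: (nddot_cases a b s) => [->|[/andP[]]]. Qed.

Lemma nddot_separated a b s : separated s (Sset a b (nddot a b s)).
Proof.
case: (nddot_cases a b s) => [->|[_]].
  by apply/separatedP => x y; rewrite /Sset /= !inE => /eqP-> /eqP->; rewrite eqxx.
by rewrite leq_dmin => /andP[].
Qed.

Lemma nddot_max a b s n : 0 < n < b -> s <= dmin a b n -> n <= nddot a b s.
Proof. by move=> hn hd; apply: (@leq_bigmax_seq _ _ _ id); rewrite ?mem_index_iota. Qed.

Lemma nddot_succ_close a b s : 0 < s <= b ->
  exists2 t, t <= nddot a b s & distn ((nddot a b s).+1 * a %% b) (t * a %% b) < s.
Proof.
case/andP=> s_gt0 s_le_b; set n := nddot a b s.
have n_lt_b : n < b by apply: nddot_lt; apply: leq_trans s_le_b.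
have [n1_eq_b | n1_lt_b] : n.+1 = b \/ n.+1 < b by lia.
  by exists 0; rewrite // n1_eq_b modnMr mul0n mod0n.
have : ~~ separated s (Sset a b n.+1).
  apply/negP => sep; suff : n.+1 <= n by rewrite ltnn.
  by apply: nddot_max; rewrite ?n1_lt_b // leq_dmin s_le_b.
case/allPn=> _ /SsetP[t ht ->] /allPn[_ /SsetP[t' ht' ->]].
rewrite negb_imply -ltnNge => /andP[ne close].
have old_sep := nddot_separated a b s; rewrite -/n in old_sep.
have [t_le|t_gt] := leqP t n; have [t'_le|t'_gt] := leqP t' n.
- by move: ne; rewrite (separated_eq old_sep (mem_Sset a b t_le) (mem_Sset a b t'_le) close) eqxx.
- have t'_eq : t' = n.+1 by lia.
  by exists t; rewrite // /distn addnC -t'_eq.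
- have t_eq : t = n.+1 by lia.
  by exists t'; rewrite // -t_eq.
- have t_eq : t = n.+1 by lia.
  by move: ne; rewrite t_eq (_ : t' = n.+1) ?eqxx //; lia.
Qed.

Lemma mod_inv_decode a b inv n : a * inv = 1 %[mod b] -> n < b ->
  (n * a %% b) * inv %% b = n.
Proof.
by move=> ainv n_lt; rewrite modnMml -mulnA -modnMmr ainv modnMmr muln1 modn_small.
Qed.

Lemma gap_residue {m a b k n r r'} : 0 < m ->
  k * (m * b) + r = n * (m * a) + r' -> r < m * b -> k * b <= n * a ->
  n * a - k * b = n * a %% b.
Proof.
move=> m_gt0 eqN r_lt le_kn; set d := n * a - k * b.
have na_eq : n * a = k * b + d by rewrite subnKC.
have : m * d < m * b.
  have := congr1 (muln m) na_eq; rewrite mulnDr; lia.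
by rewrite ltn_pmul2l // => d_lt; rewrite na_eq modnMDl modn_small.
Qed.

Lemma coprime_mul_eq0 {a b k n} : coprime a b -> n < a -> k * a = n * b -> k = 0 /\ n = 0.
Proof.
move=> cop n_lt eq_kn.
have : a %| n * b by rewrite -eq_kn dvdn_mull.
rewrite Gauss_dvdl // /dvdn modn_small // => /eqP n0.
by move: eq_kn; rewrite n0 mul0n => /eqP; rewrite muln_eq0; lia.
Qed.

Lemma leq_divn_of_ltn N d n : 0 < d -> N < d * n.+1 -> N %/ d <= n.
Proof. by move=> d_gt0 N_lt; rewrite -ltnS ltn_divLR // mulnC. Qed.

Lemma common_window_above {a b s} : 0 < s -> distn a b < s ->
  exists2 q, q <= maxn a b &
    [/\ 2 * a <= 2 * q + s, 2 * q < 2 * a + s, 2 * b <= 2 * q + s & 2 * q < 2 * b + s].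
Proof. by rewrite /distn => *; exists ((2 * maxn a b + 1 - s) %/ 2); [lia | split; lia]. Qed.

Lemma common_window_below {a b s} : 0 < s -> distn a b < s ->
  exists2 p, p <= maxn a b &
    [/\ 2 * p <= 2 * a + s, 2 * a < 2 * p + s, 2 * p <= 2 * b + s & 2 * b < 2 * p + s].
Proof. by rewrite /distn => *; exists ((2 * maxn a b + 2 - s) %/ 2); [lia | split; lia]. Qed.

Local Open Scope ring_scope.

Lemma distn_ltr (x y s : nat) :
  x%:R < y%:R + s%:R :> rat -> y%:R < x%:R + s%:R :> rat -> (distn x y < s)%N.
Proof. by rewrite -!natrD !ltr_nat /distn; lia. Qed.

Lemma round_natD (n : nat) (x : rat) : - (1 / 2) <= x -> x < 1 / 2 -> round (n%:R + x) = n.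
Proof.
move=> x_ge x_lt; rewrite /round; apply: floor_def.
by rewrite -[n%:R]/(n%:Z%:~R) intrD; apply/andP; split; lra.
Qed.

Lemma window_div {s G : nat} {e : rat} : (s < G)%N ->
  - (s%:R / 2) <= e -> e < s%:R / 2 -> - (1 / 2) < e / G%:R < 1 / 2.
Proof.
move=> s_lt e_ge e_lt.
have G_gt0 : 0 < G%:R :> rat by rewrite ltr0n; lia.
have s_lt' : s%:R + 1 <= G%:R :> rat by rewrite natr1 ler_nat.
by rewrite ltr_pdivrMr // ltr_pdivlMr //; apply/andP; split; lra.
Qed.

Lemma select_above (S : seq nat) (s c d : nat) (q : rat) (P : Prop) :
  separated s S -> c \in S -> d \in S ->
  - (s%:R / 2) <= q - d%:R -> q - d%:R < s%:R / 2 ->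
  (if has (fun x : nat => (- (s%:R / 2) <= q - x%:R) && (q - x%:R < s%:R / 2)) S
   then - (s%:R / 2) <= q - c%:R /\ q - c%:R < s%:R / 2 else P) -> c = d.
Proof.
move=> sep cS dS d_ge d_lt; rewrite (introT hasP); last by exists d; rewrite // d_ge.
by case=> c_ge c_lt; apply: (separated_eq sep cS dS); apply: distn_ltr; lra.
Qed.

Lemma select_below (S : seq nat) (s c d : nat) (q : rat) (P : Prop) :
  separated s S -> c \in S -> d \in S ->
  - (s%:R / 2) <= q + d%:R -> q + d%:R < s%:R / 2 ->
  (if has (fun y : nat => (- (s%:R / 2) <= q + y%:R) && (q + y%:R < s%:R / 2)) S
   then - (s%:R / 2) <= q + c%:R /\ q + c%:R < s%:R / 2 else P) -> c = d.
Proof.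
move=> sep cS dS d_ge d_lt; rewrite (introT hasP); last by exists d; rewrite // d_ge.
by case=> c_ge c_lt; apply: (separated_eq sep cS dS); apply: distn_ltr; lra.
Qed.

Lemma err_okE m G1 G2 j N r1t r2t : err_ok m G1 G2 j N r1t r2t <->
  let s : rat := (sigma G1 G2 j)%:R in
  let e : rat := ((r1t%:R - (N %% (m * G1))%:R) - (r2t%:R - (N %% (m * G2))%:R)) / m%:R in
  - (s / 2) <= e /\ e < s / 2.
Proof. by rewrite /err_ok /= !rmorphB. Qed.

Lemma window_nat {x y s : nat} : (2 * x <= 2 * y + s)%N -> (2 * y < 2 * x + s)%N ->
  - (s%:R / 2) <= y%:R - x%:R :> rat /\ y%:R - x%:R < s%:R / 2 :> rat.
Proof.
move=> h1 h2.
have h1' : 2 * x%:R <= 2 * y%:R + s%:R :> rat by rewrite -!natrM -natrD ler_nat.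
have h2' : 2 * y%:R < 2 * x%:R + s%:R :> rat by rewrite -!natrM -natrD ltr_nat.
by split; lra.
Qed.

Section Decoding.

Variables (m G1 G2 j N r1t r2t : nat) (n1h n2h : int).

Local Notation s := (sigma G1 G2 j).
Local Notation n1 := (N %/ (m * G1))%N.
Local Notation n2 := (N %/ (m * G2))%N.
Local Notation r1 := (N %% (m * G1))%N.
Local Notation r2 := (N %% (m * G2))%N.

Variable e : rat.

Hypotheses (e_def : e = ((r1t%:R - r1%:R) - (r2t%:R - r2%:R)) / m%:R)
  (m_gt0 : (0 < m)%N) (cop : coprime G1 G2) (G12 : (G1 < G2)%N)
  (s_bounds : (0 < s < G1)%N)
  (n1_le : (n1 <= nddot G1 G2 s)%N) (n2_le : (n2 <= nddot G2 G1 s)%N)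
  (dec : alg2 m G1 G2 j r1t r2t n1h n2h).

Let G1_gt0 : (0 < G1)%N. Proof. by case/andP: s_bounds; apply: ltn_trans. Qed.
Let s_lt_G1 : (s < G1)%N. Proof. by case/andP: s_bounds. Qed.
Let G2_gt0 : (0 < G2)%N. Proof. exact: ltn_trans G1_gt0 G12. Qed.
Let n2_lt : (n2 < G1)%N. Proof. exact: leq_ltn_trans n2_le (nddot_lt G2 G1 s G1_gt0). Qed.
Let n1_lt : (n1 < G2)%N. Proof. exact: leq_ltn_trans n1_le (nddot_lt G1 G2 s G2_gt0). Qed.

Let N_eq : (n1 * (m * G1) + r1 = n2 * (m * G2) + r2)%N.
Proof. by rewrite -!divn_eq. Qed.

Let q_split : (r1t%:R - r2t%:R) / m%:R = (n2 * G2)%N%:R - (n1 * G1)%N%:R + e.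
Proof.
rewrite e_def; have := congr1 (GRing.natmul (1 : rat)) N_eq; rewrite !natrD !natrM => E.
have -> : r1%:R = n2%:R * (m%:R * G2%:R) + r2%:R - n1%:R * (m%:R * G1%:R) :> rat by lra.
by field; rewrite pnatr_eq0 -lt0n.
Qed.

Let round_arg_above :
  (n2%:Z%:~R * (m * G2)%:R + r2t%:R - r1t%:R) / (m * G1)%:R = n1%:R - e / G1%:R :> rat.
Proof.
rewrite e_def; have := congr1 (GRing.natmul (1 : rat)) N_eq; rewrite !natrD !natrM => E.
rewrite [n2%:Z%:~R]/(n2%:R).
have -> : n2%:R * (m%:R * G2%:R) = n1%:R * (m%:R * G1%:R) + r1%:R - r2%:R :> rat by lra.
by field; rewrite !pnatr_eq0 -!lt0n m_gt0 G1_gt0.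
Qed.

Lemma alg2_correct_above : - (s%:R / 2) <= e -> e < s%:R / 2 ->
  (n1 * G1 < n2 * G2)%N -> n1h = n1 /\ n2h = n2.
Proof.
move=> e_ge e_lt lt12; set d := (n2 * G2 - n1 * G1)%N.
have d_mod : d = (n2 * G2 %% G1)%N.
  rewrite /d (gap_residue m_gt0 N_eq) //; last exact: ltnW.
  by rewrite ltn_pmod // muln_gt0 m_gt0.
have dS : d \in Sset G2 G1 (nddot G2 G1 s) by rewrite d_mod mem_Sset.
have s_le_d : (s <= d)%N.
  by apply: separated_ge (nddot_separated _ _ _) (Sset0 _ _ _) dS _; rewrite subn_gt0.
have s_le_d' : s%:R <= d%:R :> rat by rewrite ler_nat.
have q_eq : (r1t%:R - r2t%:R) / m%:R = d%:R + e by rewrite q_split natrB // ltnW.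
move: dec; rewrite /alg2; cbv zeta; rewrite q_eq ifT; last by lra.
case=> c [cS [sel [inv [inv_mod [-> ->]]]]].
have -> : c = d by apply: select_above (nddot_separated _ _ _) cS dS _ _ sel; lra.
rewrite d_mod mod_inv_decode //; split => //.
have /andP[? ?] := window_div s_lt_G1 e_ge e_lt.
by rewrite round_arg_above; apply: round_natD; lra.
Qed.

Let round_arg_below :
  (n1%:Z%:~R * (m * G1)%:R + r1t%:R - r2t%:R) / (m * G2)%:R = n2%:R + e / G2%:R :> rat.
Proof.
rewrite e_def; have := congr1 (GRing.natmul (1 : rat)) N_eq; rewrite !natrD !natrM => E.
rewrite [n1%:Z%:~R]/(n1%:R).
have -> : n1%:R * (m%:R * G1%:R) = n2%:R * (m%:R * G2%:R) + r2%:R - r1%:R :> rat by lra.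
by field; rewrite !pnatr_eq0 -!lt0n m_gt0 G2_gt0.
Qed.

Lemma alg2_correct_below : - (s%:R / 2) <= e -> e < s%:R / 2 ->
  (n2 * G2 < n1 * G1)%N -> n1h = n1 /\ n2h = n2.
Proof.
move=> e_ge e_lt lt21; set d := (n1 * G1 - n2 * G2)%N.
have d_mod : d = (n1 * G1 %% G2)%N.
  rewrite /d (gap_residue m_gt0 (esym N_eq)) //; last exact: ltnW.
  by rewrite ltn_pmod // muln_gt0 m_gt0.
have dS : d \in Sset G1 G2 (nddot G1 G2 s) by rewrite d_mod mem_Sset.
have s_le_d : (s <= d)%N.
  by apply: separated_ge (nddot_separated _ _ _) (Sset0 _ _ _) dS _; rewrite subn_gt0.
have s_le_d' : s%:R <= d%:R :> rat by rewrite ler_nat.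
have q_eq : (r1t%:R - r2t%:R) / m%:R = - d%:R + e.
  by rewrite q_split natrB; [lra | exact: ltnW].
move: dec; rewrite /alg2; cbv zeta; rewrite q_eq ifN -?ltNge; last by lra.
rewrite ifT; last by lra.
case=> c [cS [sel [inv [inv_mod [-> ->]]]]].
have -> : c = d by apply: select_below (nddot_separated _ _ _) cS dS _ _ sel; lra.
rewrite d_mod mod_inv_decode //; split => //.
have /andP[? ?] := window_div (ltn_trans s_lt_G1 G12) e_ge e_lt.
by rewrite round_arg_below; apply: round_natD; lra.
Qed.

Lemma alg2_correct_balanced : - (s%:R / 2) <= e -> e < s%:R / 2 ->
  (n1 * G1 = n2 * G2)%N -> n1h = n1 /\ n2h = n2.
Proof.
move=> e_ge e_lt eq12; have [-> ->] := coprime_mul_eq0 cop n2_lt eq12.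
move: dec; rewrite /alg2; cbv zeta; rewrite q_split eq12 subrr add0r.
by rewrite ifN -?ltNge // ifN -?leNgt //; case=> -> ->.
Qed.

Lemma alg2_correct : - (s%:R / 2) <= e -> e < s%:R / 2 -> n1h = n1 /\ n2h = n2.
Proof.
move=> e_ge e_lt; case: (ltngtP (n1 * G1) (n2 * G2)).
- exact: alg2_correct_above.
- exact: alg2_correct_below.
- exact: alg2_correct_balanced.
Qed.

End Decoding.

Arguments alg2_correct {m G1 G2 j N r1t r2t n1h n2h e}.

Definition decoding_fails_at (m G1 G2 j X : nat) : Prop :=
  exists r1t r2t : nat, (r1t < m * G1)%N /\ (r2t < m * G2)%N /\
    err_ok m G1 G2 j X r1t r2t /\
    forall n1h n2h : int, alg2 m G1 G2 j r1t r2t n1h n2h ->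
      (n1h, n2h) <> (Posz (X %/ (m * G1)), Posz (X %/ (m * G2))).

Section Sharpness.

Variables m G1 G2 j : nat.

Local Notation s := (sigma G1 G2 j).

Hypotheses (m_gt0 : (0 < m)%N) (G12 : (G1 < G2)%N) (s_bounds : (0 < s < G1)%N).

Let s_gt0 : (0 < s)%N. Proof. by case/andP: s_bounds. Qed.
Let s_lt_G1 : (s < G1)%N. Proof. by case/andP: s_bounds. Qed.
Let G1_gt0 : (0 < G1)%N. Proof. exact: ltn_trans s_gt0 s_lt_G1. Qed.
Let G2_gt0 : (0 < G2)%N. Proof. exact: ltn_trans G1_gt0 G12. Qed.

Lemma alg2_fails_at_m2_bound : decoding_fails_at m G1 G2 j (m * G2 * (1 + nddot G2 G1 s)).
Proof.
set n2 := (nddot G2 G1 s).+1; rewrite add1n.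
have [t t_le close] : exists2 t, (t <= nddot G2 G1 s)%N &
    (distn (n2 * G2 %% G1) (t * G2 %% G1) < s)%N.
  by apply: nddot_succ_close; rewrite s_gt0 ltnW.
set a := (n2 * G2 %% G1)%N in close; set b := (t * G2 %% G1)%N in close.
have [q q_le [a1 a2 b1 b2]] := common_window_above s_gt0 close.
have q_lt : (q < G1)%N by rewrite (leq_ltn_trans q_le) // gtn_max !ltn_pmod.
have X_mod1 : (m * G2 * n2 %% (m * G1) = m * a)%N.
  by rewrite /a muln_modr [(n2 * G2)%N]mulnC mulnA.
have X_mod2 : (m * G2 * n2 %% (m * G2) = 0)%N by rewrite modnMr.
have X_div2 : (m * G2 * n2 %/ (m * G2) = n2)%N by rewrite mulKn // muln_gt0 m_gt0.
have [qa_ge qa_lt] := window_nat a1 a2; have [qb_ge qb_lt] := window_nat b1 b2.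
exists (m * q)%N, 0%N; split; first by rewrite ltn_pmul2l.
split; first by rewrite muln_gt0 m_gt0.
split.
  apply/err_okE; rewrite X_mod1 X_mod2 /= !natrM.
  have -> : (m%:R * q%:R - m%:R * a%:R - (0%:R - 0%:R)) / m%:R = q%:R - a%:R :> rat.
    by field; rewrite pnatr_eq0 -lt0n.
  by [].
move=> n1h n2h; rewrite /alg2 X_div2; cbv zeta.
have -> : ((m * q)%N%:R - 0%:R) / m%:R = q%:R :> rat.
  by rewrite natrM subr0 mulrC mulKf // pnatr_eq0 -lt0n.
case: ifP => _.
  case=> c [cS [sel [inv [inv_mod [-> _]]]]] [_].
  have bS : b \in Sset G2 G1 (nddot G2 G1 s) by apply: mem_Sset.
  have -> : c = b by apply: select_above (nddot_separated _ _ _) cS bS qb_ge qb_lt sel.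
  rewrite mod_inv_decode //; last exact: leq_ltn_trans t_le (nddot_lt _ _ _ G1_gt0).
  by move=> [] t_eq; move: t_le; rewrite t_eq ltnn.
have q_ge0 : 0 <= q%:R :> rat by rewrite ler0n.
have s_pos : 0 < s%:R :> rat by rewrite ltr0n.
rewrite ifN -?leNgt; last by lra.
by case=> _ ->.
Qed.

Lemma alg2_fails_at_m1_bound : decoding_fails_at m G1 G2 j (m * G1 * (1 + nddot G1 G2 s)).
Proof.
set n1 := (nddot G1 G2 s).+1; rewrite add1n.
have [t t_le close] : exists2 t, (t <= nddot G1 G2 s)%N &
    (distn (n1 * G1 %% G2) (t * G1 %% G2) < s)%N.
  by apply: nddot_succ_close; rewrite s_gt0 ltnW // (ltn_trans s_lt_G1).
set a := (n1 * G1 %% G2)%N in close; set b := (t * G1 %% G2)%N in close.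
have [p p_le [a1 a2 b1 b2]] := common_window_below s_gt0 close.
have p_lt : (p < G2)%N by rewrite (leq_ltn_trans p_le) // gtn_max !ltn_pmod.
have X_mod1 : (m * G1 * n1 %% (m * G1) = 0)%N by rewrite modnMr.
have X_mod2 : (m * G1 * n1 %% (m * G2) = m * a)%N.
  by rewrite /a muln_modr [(n1 * G1)%N]mulnC mulnA.
have X_div1 : (m * G1 * n1 %/ (m * G1) = n1)%N by rewrite mulKn // muln_gt0 m_gt0.
have [ap_ge ap_lt] := window_nat a1 a2; have [bp_ge bp_lt] := window_nat b1 b2.
exists 0%N, (m * p)%N; split; first by rewrite muln_gt0 m_gt0.
split; first by rewrite ltn_pmul2l.
split.
  apply/err_okE; rewrite X_mod1 X_mod2 /= !natrM.
  have -> : (0%:R - 0%:R - (m%:R * p%:R - m%:R * a%:R)) / m%:R = a%:R - p%:R :> rat.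
    by field; rewrite pnatr_eq0 -lt0n.
  by [].
move=> n1h n2h; rewrite /alg2 X_div1; cbv zeta.
have -> : (0%:R - (m * p)%N%:R) / m%:R = - p%:R :> rat.
  by rewrite natrM sub0r mulNr mulrC mulKf // pnatr_eq0 -lt0n.
have p_ge0 : 0 <= p%:R :> rat by rewrite ler0n.
have s_pos : 0 < s%:R :> rat by rewrite ltr0n.
rewrite ifN -?ltNge; last by lra.
case: ifP => _.
  case=> c [cS [sel [inv [inv_mod [-> _]]]]] [].
  have bS : b \in Sset G1 G2 (nddot G1 G2 s) by apply: mem_Sset.
  have -> : c = b by apply: select_below (nddot_separated _ _ _) cS bS _ _ sel; lra.
  rewrite mod_inv_decode //; last exact: leq_ltn_trans t_le (nddot_lt _ _ _ G2_gt0).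
  by move=> t_eq; move: t_le; rewrite t_eq ltnn.
by case=> ->.
Qed.

End Sharpness.

Local Close Scope ring_scope.

Theorem theorem2 (m G1 G2 K j : nat)
  (hm : (1 <= m)%N) (hcop : coprime G1 G2) (h1 : (1 < G1)%N) (h12 : (G1 < G2)%N)
  (hK1 : (1 < sigma G1 G2 K)%N) (hK2 : sigma G1 G2 K.+1 = 1%N)
  (hj : (1 <= j <= K.+1)%N) :
  let m1 := (m * G1)%N in
  let m2 := (m * G2)%N in
  let X := minn (m2 * (1 + nddot G2 G1 (sigma G1 G2 j)))
                (m1 * (1 + nddot G1 G2 (sigma G1 G2 j))) in
  (forall N r1t r2t : nat, (N < X)%N -> (r1t < m1)%N -> (r2t < m2)%N ->
     err_ok m G1 G2 j N r1t r2t ->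
     forall n1h n2h : int, alg2 m G1 G2 j r1t r2t n1h n2h ->
       n1h = Posz (N %/ m1) /\ n2h = Posz (N %/ m2))
  /\
  (exists r1t r2t : nat, (r1t < m1)%N /\ (r2t < m2)%N /\
     err_ok m G1 G2 j X r1t r2t /\
     forall n1h n2h : int, alg2 m G1 G2 j r1t r2t n1h n2h ->
       (n1h, n2h) <> (Posz (X %/ m1), Posz (X %/ m2))).
Proof.
move=> m1 m2 X; have s_bounds := @sigma_bounds G1 G2 K hK1 hK2 j hj.
split.
- move=> N r1t r2t; rewrite leq_min !add1n => /andP[N_lt2 N_lt1] _ _.
  move=> /err_okE[e_ge e_lt] n1h n2h dec.
  apply: (alg2_correct erefl hm hcop h12 s_bounds _ _ dec e_ge e_lt).
  + by apply: leq_divn_of_ltn N_lt1; rewrite muln_gt0 hm ltnW.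
  + by apply: leq_divn_of_ltn N_lt2; rewrite muln_gt0 hm (ltn_trans _ h12) // ltnW.
- rewrite /X /minn; case: ifP => _.
  + exact: alg2_fails_at_m2_bound.
  + exact: alg2_fails_at_m1_bound.
Qed.
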